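(* Let $n,m\ge 4$, $N = 2^{n-1}$, $M = 2^{m-1}$, $\alpha = 2^{n-2}-1$, $\beta = 2^{m-2}-1$, and let $G = HK$ be an exact product with $H = \langle x\rangle\rtimes\langle y\rangle\cong\mathrm{SD}_{2^n}$ ($x^N = y^2 = 1$, $x^y = x^\alpha$) and $K = \langle z\rangle \rtimes\langle w\rangle \cong \mathrm{SD}_{2^m}$ ($z^M = w^2 = 1$, $z^w = z^\beta$), such that $[x,z] = 1$, $[z,y] = x^r z^a$, $[x,w] = x^s z^b$ and $[y,w] = x^tz^c$ for some $r,s,t \in \mathbb{Z}_N$, $a,b,c\in\mathbb{Z}_M$. Let $n_1$ be a divisor of $N$ and $m_1$ a divisor of $M$. Then $\langle x^{n_1}\rangle$ is the core of $\langle x\rangle$ in $G$ if and only if $b$ has additive order exactly $n_1$ in $\mathbb{Z}_M$; and $\langle z^{m_1}\rangle$ is the core of $\langle z\rangle$ in $G$ if and only if $r$ has additive order exactly $m_1$ in $\mathbb{Z}_N$.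
   Context: Conventions: $[g,h] = g^{-1}h^{-1}gh$, $g^h = h^{-1}gh$. The core of a subgroup $X\le G$ is the largest normal subgroup of $G$ contained in $X$. An exact product $G = HK$ means $G = HK$ with $H\cap K = \{1\}$. $\mathrm{SD}_{2^n}$ denotes the semidihedral group of order $2^n$. *)

From mathcomp Require Import all_boot all_order all_algebra all_fingroup all_solvable.
Set Implicit Arguments.
Unset Strict Implicit.
Unset Printing Implicit Defensive.

From mathcomp Require Import all_boot all_order all_algebra all_fingroup all_solvable.

(* Let X generate a cyclic group meeting <[Z]> trivially, with X and Z commuting, and let
   v conjugate X to u = X^p Z^e.  Then u^k lies in <[X]> exactly when Z^(ek) = 1, i.e.
   when o = #[Z^e] divides k; hence <[X]> :&: <[X]>^v = <[u^o]> = <[X^o]>.  This cyclic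
   group is normalised by v, by Z, and by anything normalising <[X]> (it is
   characteristic in <[X]>), so it is the core of <[X]> in any group generated by these.
   For G = HK both cycles <[x]> and <[z]> are in this situation, with (u, Z^e) equal to
   (x^w, z^b) and (z^y, x^r) respectively, and #[z^b] = #[b], #[x^r] = #[r]. *)

Set Implicit Arguments.
Unset Strict Implicit.
Unset Printing Implicit Defensive.

Local Open Scope group_scope.

Lemma order_expg_Zp (gT : finGroupType) (g : gT) N (c : 'Z_N) :
  (1 < N)%N -> #[g] = N -> #[g ^+ c] = #[c].
Proof.
move=> N_gt1 og.
rewrite -{2}(Zp1_expgz c) !orderXgcd order_Zp1 og.
have eN := Zp_cast N_gt1.
by rewrite -[X in X %/ _ = _]eN -[X in _ %/ gcdn X _ = _]eN.
Qed.

Lemma eq_cycleX (gT : finGroupType) (g : gT) d1 d2 :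
  (d1 %| #[g])%N -> (d2 %| #[g])%N -> (<[g ^+ d1]> = <[g ^+ d2]> <-> d1 = d2).
Proof.
have divK d : (d %| #[g])%N -> #[g] %/ #[g ^+ d] = d.
  by move=> dg; rewrite orderXdiv // divnA // mulKn.
move=> d1g d2g; split=> [eq_cyc | -> //].
by rewrite -(divK _ d1g) -(divK _ d2g) /order eq_cyc.
Qed.

Section CoreOfCycle.

Variables (gT : finGroupType) (X Z v : gT) (p e : nat).
Hypotheses (cXZ : commute X Z) (tiXZ : <[X]> :&: <[Z]> = 1).
Hypothesis conjX : X ^ v = X ^+ p * Z ^+ e.

Let o := #[Z ^+ e].

Lemma expg_conj_in_cycle k : (X ^ v) ^+ k \in <[X]> -> (o %| k)%N.
Proof.
have expu : (X ^ v) ^+ k = X ^+ (p * k) * Z ^+ (e * k).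
  by rewrite conjX expgMn ?expgM //; apply: commuteX2.
move=> uX; rewrite order_dvdn -expgM; apply/eqP/set1gP.
rewrite -tiXZ inE mem_cycle andbT.
have -> : Z ^+ (e * k) = (X ^+ (p * k))^-1 * (X ^ v) ^+ k by rewrite expu mulKg.
by rewrite groupM ?groupV ?mem_cycle.
Qed.

Lemma order_expg_dvd_cycle : (o %| #[X])%N.
Proof. by apply: expg_conj_in_cycle; rewrite -(orderJ X v) expg_order group1. Qed.

Lemma cycle_expg_conj : <[(X ^ v) ^+ o]> = <[X ^+ o]>.
Proof.
have oXv : #[X ^ v] = #[X] by rewrite orderJ.
apply/eqP; rewrite (eq_subG_cyclic (cycle_cyclic X)) ?cycleX //; last first.
  rewrite cycle_subG conjX expgMn; last exact: commuteX2.
  by rewrite expg_order mulg1 -expgM mem_cycle.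
have dX := order_expg_dvd_cycle.
have dXv : (o %| #[X ^ v])%N by rewrite oXv.
change (#[(X ^ v) ^+ o] == #[X ^+ o]).
by rewrite !orderXdiv // oXv.
Qed.

Lemma conj_in_norm_cycle_expg : v \in 'N(<[X ^+ o]>).
Proof. by apply/normP; rewrite -cycleJ conjXg cycle_expg_conj. Qed.

Lemma gcore_sub_cycle_expg (G : {group gT}) :
  v \in G -> gcore <[X]> G \subset <[X ^+ o]>.
Proof.
move=> vG; apply/subsetP=> g gQ.
have gX : g \in <[X]> := subsetP (gcore_sub _ _) g gQ.
have : g \in <[X]> :^ v.
  rewrite -(normP (subsetP (gcore_norm _ _) v vG)) in gQ.
  by apply: subsetP gQ; rewrite conjSg gcore_sub.
rewrite -cycleJ => /cycleP[k gk]; rewrite gk in gX *.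
have /dvdnP[j ->] := expg_conj_in_cycle gX.
by rewrite mulnC expgM -cycle_expg_conj mem_cycle.
Qed.

Lemma gcore_cycle_conj (G A : {group gT}) :
  A * (<[Z]> * <[v]>) = G -> A \subset 'N(<[X]>) -> gcore <[X]> G = <[X ^+ o]>.
Proof.
move=> defG nXA.
have normX (B : {set gT}) : B \subset 'N(<[X]>) -> B \subset 'N(<[X ^+ o]>).
  exact: char_norm_trans (cycle_subgroup_char (cycleX X o)).
have vG : v \in G.
  have := mem_mulg (group1 A) (mem_mulg (group1 <[Z]>) (cycle_id v)).
  by rewrite !mul1g defG.
have nXZ : <[Z]> \subset 'N(<[X]>).
  by rewrite cycle_subG; apply/normP; rewrite -cycleJ (conjg_fixP (introT commgP cXZ)).
apply/eqP; rewrite eqEsubset gcore_sub_cycle_expg //=.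
apply: gcore_max; first exact: cycleX.
by rewrite -defG !mul_subG ?(normX _ nXA) ?(normX _ nXZ) // cycle_subG
   conj_in_norm_cycle_expg.
Qed.

End CoreOfCycle.

Lemma gcore_cycle_eq_iff (gT : finGroupType) (G A : {group gT}) (X Z v : gT)
    N p (e : 'Z_N) d :
  (1 < N)%N -> #[Z] = N -> commute X Z -> <[X]> :&: <[Z]> = 1 ->
  X ^ v = X ^+ p * Z ^+ e -> A * (<[Z]> * <[v]>) = G -> A \subset 'N(<[X]>) ->
  (d %| #[X])%N -> (gcore <[X]> G = <[X ^+ d]> <-> #[e] = d).
Proof.
move=> N_gt1 oZ cXZ tiXZ conjX defG nXA dX.
rewrite (gcore_cycle_conj cXZ tiXZ conjX defG nXA).
have := order_expg_dvd_cycle cXZ tiXZ conjX.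
rewrite (order_expg_Zp _ N_gt1 oZ) => eX.
exact: eq_cycleX.
Qed.

Theorem lemma6p4 (gT : finGroupType) (G H K : {group gT}) (x y z w : gT)
    (n m : nat) (hn : (4 <= n)%N) (hm : (4 <= m)%N)
    (r s t : 'Z_(2 ^ n.-1)) (a b c : 'Z_(2 ^ m.-1)) (n1 m1 : nat)
    (hH : <[x]> ><| <[y]> = H) (hox : #[x] = (2 ^ n.-1)%N) (hoy : #[y] = 2%N)
    (hxy : x ^ y = x ^+ (2 ^ (n - 2) - 1)%N)
    (hK : <[z]> ><| <[w]> = K) (hoz : #[z] = (2 ^ m.-1)%N) (how : #[w] = 2%N)
    (hzw : z ^ w = z ^+ (2 ^ (m - 2) - 1)%N)
    (hG : H * K = G) (hHK : H :&: K = 1)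
    (hxz : [~ x, z] = 1)
    (hzy : [~ z, y] = x ^+ r * z ^+ a)
    (hxw : [~ x, w] = x ^+ s * z ^+ b)
    (hyw : [~ y, w] = x ^+ t * z ^+ c)
    (hn1 : (n1 %| 2 ^ n.-1)%N) (hm1 : (m1 %| 2 ^ m.-1)%N) :
  (gcore <[x]> G = <[x ^+ n1]> <-> #[b] = n1) /\
  (gcore <[z]> G = <[z ^+ m1]> <-> #[r] = m1).
Proof.
have [nxH _ defH _ _] := sdprod_context hH.
have [nzK _ defK _ _] := sdprod_context hK.
have cxz : commute x z by apply/commgP/eqP.
have tixz : <[x]> :&: <[z]> = 1.
  by apply/trivgP; rewrite -hHK setISS ?(normal_sub nxH) ?(normal_sub nzK).
have pow2_gt1 k : (2 <= k)%N -> (1 < 2 ^ k.-1)%N.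
  by move=> k_ge2; rewrite -{1}(expn0 2) ltn_exp2l // -ltnS prednK // ltnW.
have conj_xw : x ^ w = x ^+ s.+1 * z ^+ b.
  by rewrite conjg_mulR hxw mulgA -expgS.
have conj_zy : z ^ y = z ^+ a.+1 * x ^+ r.
  by rewrite conjg_mulR hzy (commuteX2 _ _ cxz) mulgA -expgS.
have defGKH : K * (<[x]> * <[y]>) = G.
  by rewrite defH -hG; apply/esym/comm_group_setP; rewrite hG groupP.
split.
  apply: (gcore_cycle_eq_iff (pow2_gt1 m _) hoz cxz tixz conj_xw _ (normal_norm nxH)).
  - exact: leq_trans hm.
  - by rewrite defK.
  - by rewrite hox.
have tizx : <[z]> :&: <[x]> = 1 by rewrite setIC.
apply: (gcore_cycle_eq_iff (pow2_gt1 n _) hox (commute_sym cxz) tizx conj_zy defGKH).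
- exact: leq_trans hn.
- exact: normal_norm nzK.
- by rewrite hoz.
Qed.
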